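(* Let $X$ be a set and let $\mathcal{L}$ be a nest on $X$. If $M\in\mathcal{L}$, then ${\downarrow}M=\bigcup\{L\in\mathcal{L} : M\not\subseteq L\}=\bigcup\{L\in\mathcal{L} : L\subsetneq M\}$; hence $M$ is a lower set if and only if $M=\bigcup\{L\in\mathcal{L} : L\subsetneq M\}$.
   Context: A nest on $X$ is a family of subsets of $X$ totally ordered by inclusion. Define $x\triangleleft_{\mathcal{L}} y$ iff there exists $L\in\mathcal{L}$ with $x\in L$ and $y\notin L$. For $A\subseteq X$, ${\downarrow}A=\{x\in X : \exists y\in A,\ x\triangleleft_{\mathcal{L}} y\}$; $A$ is a lower set if $A={\downarrow}A$. *)

Set Implicit Arguments.

Definition subset {X : Type} (A B : X -> Prop) : Prop := forall x, A x -> B x.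

Definition set_eq {X : Type} (A B : X -> Prop) : Prop := forall x, A x <-> B x.

Definition psubset {X : Type} (A B : X -> Prop) : Prop :=
  subset A B /\ ~ subset B A.

Definition bigU {X : Type} (F : (X -> Prop) -> Prop) : X -> Prop :=
  fun x => exists L, F L /\ L x.

Definition is_nest {X : Type} (N : (X -> Prop) -> Prop) : Prop :=
  forall L1 L2, N L1 -> N L2 -> subset L1 L2 \/ subset L2 L1.

Definition nest_rel {X : Type} (N : (X -> Prop) -> Prop) (x y : X) : Prop :=
  exists L, N L /\ L x /\ ~ L y.

Definition down {X : Type} (N : (X -> Prop) -> Prop) (A : X -> Prop) : X -> Prop :=
  fun x => exists y, A y /\ nest_rel N x y.

Definition lower_set {X : Type} (N : (X -> Prop) -> Prop) (A : X -> Prop) : Prop :=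
  set_eq A (down N A).

(* In a nest, a member L fails to contain M exactly when it is properly
   contained in M, so the two families have the same union. The first
   description of the down-closure needs no nest at all: x lies below some
   point of M iff some L of the family contains x but not all of M. *)

From Stdlib Require Import Classical.

Lemma set_eq_sym {X : Type} {A B : X -> Prop} : set_eq A B -> set_eq B A.
Proof. intros H x. symmetry. apply H. Qed.

Lemma set_eq_trans {X : Type} {A B C : X -> Prop} :
  set_eq A B -> set_eq B C -> set_eq A C.
Proof. intros HAB HBC x. rewrite (HAB x). apply HBC. Qed.

Lemma set_eq_congr_r {X : Type} (A : X -> Prop) {B C : X -> Prop} :
  set_eq B C -> (set_eq A B <-> set_eq A C).
Proof.
  intros HBC; split; intros H.
  - exact (set_eq_trans H HBC).
  - exact (set_eq_trans H (set_eq_sym HBC)).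
Qed.

Lemma bigU_ext {X : Type} (F G : (X -> Prop) -> Prop) :
  (forall L, F L <-> G L) -> set_eq (bigU F) (bigU G).
Proof.
  intros HFG x; split; intros [L [HL Lx]]; exists L; split; auto; apply HFG; exact HL.
Qed.

Lemma down_eq_bigU_not_supset {X : Type} (N : (X -> Prop) -> Prop) (M : X -> Prop) :
  set_eq (down N M) (bigU (fun L => N L /\ ~ subset M L)).
Proof.
  intro x; split.
  - intros [y [My [L [NL [Lx nLy]]]]].
    exists L; split; [split |]; [exact NL | | exact Lx].
    intro ML. exact (nLy (ML y My)).
  - intros [L [[NL nML] Lx]].
    destruct (not_all_ex_not _ _ nML) as [y Hy].
    destruct (imply_to_and _ _ Hy) as [My nLy].
    exists y; split; [exact My |].
    exists L; auto.
Qed.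

Lemma nest_not_supset_psubset {X : Type} {N : (X -> Prop) -> Prop} {M L : X -> Prop} :
  is_nest N -> N M -> N L -> (~ subset M L <-> psubset L M).
Proof.
  intros Hnest NM NL; split.
  - intros nML. split; [| exact nML].
    destruct (Hnest L M NL NM); tauto.
  - intros [_ nML]. exact nML.
Qed.

Theorem proposition3p11 (X : Type) (N : (X -> Prop) -> Prop) (M : X -> Prop) :
  is_nest N -> N M ->
  set_eq (down N M) (bigU (fun L => N L /\ ~ subset M L)) /\
  set_eq (down N M) (bigU (fun L => N L /\ psubset L M)) /\
  (lower_set N M <-> set_eq M (bigU (fun L => N L /\ psubset L M))).
Proof.
  intros Hnest NM.
  pose proof (down_eq_bigU_not_supset N M) as down_not_supset.
  assert (down_psubset : set_eq (down N M) (bigU (fun L => N L /\ psubset L M))).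
  { apply (set_eq_trans down_not_supset), bigU_ext. intro L.
    split; intros [NL HL]; split; auto;
      apply (nest_not_supset_psubset Hnest NM NL); exact HL. }
  split; [exact down_not_supset |].
  split; [exact down_psubset |].
  exact (set_eq_congr_r M down_psubset).
Qed.
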